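(* For every default ABMN solution, the central ratio $\frac{n_{-1}-n_0}{m_0-m_{-1}}$ lies in $(0,\infty)$. For every $x\in(0,\infty)$ there is exactly one default ABMN solution whose central ratio equals $x$.
   Context: ABMN system on $\mathbb{Z}$: real variables $a_i,b_i\ge0$, $m_i,n_i$ with, for all $i$, $(a_i+b_i)(m_i+a_i)=a_im_{i+1}+b_im_{i-1}$, $(a_i+b_i)(n_i+b_i)=a_in_{i+1}+b_in_{i-1}$, $(a_i+b_i)^2=b_i(m_{i+1}-m_{i-1})$, $(a_i+b_i)^2=a_i(n_{i-1}-n_{i+1})$. Solutions considered are positive ($a_i,b_i>0$ for all $i$), so $m_{\pm\infty}=\lim_{i\to\pm\infty}m_i$, $n_{\pm\infty}=\lim_{i\to\pm\infty}n_i$ exist in $\mathbb{R}$. A (positive) solution is default if $m_{-\infty}=0$, $n_\infty=0$ and $m_0-m_{-1}=1$. The central ratio is $\frac{n_{-1}-n_0}{m_0-m_{-1}}$. *)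

From Stdlib Require Import Reals ZArith.
Open Scope R_scope.

Definition ABMN (a b m n : Z -> R) : Prop :=
  forall i : Z,
    (a i + b i) * (m i + a i) = a i * m (i + 1)%Z + b i * m (i - 1)%Z /\
    (a i + b i) * (n i + b i) = a i * n (i + 1)%Z + b i * n (i - 1)%Z /\
    (a i + b i) ^ 2 = b i * (m (i + 1)%Z - m (i - 1)%Z) /\
    (a i + b i) ^ 2 = a i * (n (i - 1)%Z - n (i + 1)%Z).

Definition positive_ABMN (a b m n : Z -> R) : Prop :=
  ABMN a b m n /\ forall i : Z, 0 < a i /\ 0 < b i.

Definition lim_pinfty (u : Z -> R) (L : R) : Prop :=
  forall eps : R, 0 < eps -> exists N : Z, forall i : Z, (N <= i)%Z -> Rabs (u i - L) < eps.
Definition lim_minfty (u : Z -> R) (L : R) : Prop :=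
  forall eps : R, 0 < eps -> exists N : Z, forall i : Z, (i <= N)%Z -> Rabs (u i - L) < eps.

Definition default_ABMN (a b m n : Z -> R) : Prop :=
  positive_ABMN a b m n /\ lim_minfty m 0 /\ lim_pinfty n 0 /\
  m 0%Z - m (-1)%Z = 1.

Definition central_ratio (m n : Z -> R) : R :=
  (n (-1)%Z - n 0%Z) / (m 0%Z - m (-1)%Z).

From Stdlib Require Import Reals Lra Lia Psatz ZArith.
Open Scope R_scope.

(* Eliminating m and n, the ABMN equations at a positive solution say exactly that
   m_i - m_(i-1) = a_i^2 / b_i, n_(i-1) - n_i = a_i + 2 b_i, and that consecutive pairs are
   linked by a_(i+1)^2 = b_(i+1) (b_i + 2 a_i) and a_i (a_(i+1) + 2 b_(i+1)) = b_i^2.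
   For positive pairs this relation determines (a_(i+1), b_(i+1)) from (a_i, b_i) and,
   since it is symmetric under reversing the order and exchanging a with b, also
   (a_i, b_i) from (a_(i+1), b_(i+1)).  A default solution has b_0 = a_0^2 and central ratio
   a_0 + 2 b_0, so the ratio is positive and fixes (a, b) everywhere; m and n are then fixed
   by their increments and their limits.
   For existence, run the recursion in both directions from (a_0, a_0^2); the increments
   of m towards -oo and of n towards +oo are both sums of p + 2q along forward orbits
   (p, q) of the recursion.  The potential p^2 / (q (p + 2q)) grows at least ninefold at
   each step, so eventually q <= p, and from then on p + 2q shrinks at least threefold. *)

(** * The ABMN equations in terms of increments *)

Lemma m_equations_iff A B m0 m1 m2 : 0 < A -> 0 < B ->
  ((A + B) * (m1 + A) = A * m2 + B * m0 /\ (A + B) ^ 2 = B * (m2 - m0)) <->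
  (m1 - m0 = A ^ 2 / B /\ m2 - m1 = B + 2 * A).
Proof.
  intros HA HB; split.
  - intros [H1 H2].
    assert (Hd0 : B * (m1 - m0) = A ^ 2).
    { apply (Rmult_eq_reg_l (A + B)); [|lra].
      replace ((A + B) * (B * (m1 - m0)))
        with (A * (B * (m2 - m0)) - B * (A * m2 + B * m0 - (A + B) * m1)) by ring.
      rewrite <- H2, <- H1; ring. }
    split.
    + apply (Rmult_eq_reg_l B); [|lra]. rewrite Hd0. field. lra.
    + apply (Rmult_eq_reg_l A); [|lra].
      replace (A * (m2 - m1)) with (A * m2 + B * m0 - (A + B) * m1 + B * (m1 - m0)) by ring.
      rewrite <- H1, Hd0; ring.
  - intros [H1 H2].
    assert (Hd0 : B * (m1 - m0) = A ^ 2) by (rewrite H1; field; lra).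
    split; nra.
Qed.

Lemma n_equations_iff A B n0 n1 n2 : 0 < A -> 0 < B ->
  ((A + B) * (n1 + B) = A * n2 + B * n0 /\ (A + B) ^ 2 = A * (n0 - n2)) <->
  (n1 - n2 = B ^ 2 / A /\ n0 - n1 = A + 2 * B).
Proof.
  intros HA HB. rewrite <- (m_equations_iff B A n2 n1 n0 HB HA).
  rewrite (Rplus_comm B A), (Rplus_comm (B * n0)). reflexivity.
Qed.

Definition linked (a b a' b' : R) : Prop :=
  a' ^ 2 = b' * (b + 2 * a) /\ a * (a' + 2 * b') = b ^ 2.

Lemma linked_swap a b a' b' : linked a b a' b' -> linked b' a' b a.
Proof. intros [H1 H2]; split; lra. Qed.

Lemma positive_ABMN_iff a b m n : (forall i, 0 < a i /\ 0 < b i) ->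
  ABMN a b m n <->
  forall i, m i - m (i - 1)%Z = a i ^ 2 / b i /\ n (i - 1)%Z - n i = a i + 2 * b i /\
            linked (a i) (b i) (a (i + 1)%Z) (b (i + 1)%Z).
Proof.
  intros Hpos; split.
  - intros H i.
    destruct (Hpos i) as [Ha Hb]; destruct (Hpos (i + 1)%Z) as [Ha' Hb'].
    destruct (H i) as [M1 [N1 [M2 N2]]].
    destruct (H (i + 1)%Z) as [M1' [N1' [M2' N2']]]; rewrite Z.add_simpl_r in *.
    destruct (proj1 (m_equations_iff _ _ _ _ _ Ha Hb) (conj M1 M2)) as [Dm Dm1].
    destruct (proj1 (n_equations_iff _ _ _ _ _ Ha Hb) (conj N1 N2)) as [En1 En].
    destruct (proj1 (m_equations_iff _ _ _ _ _ Ha' Hb') (conj M1' M2')) as [Dm' _].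
    destruct (proj1 (n_equations_iff _ _ _ _ _ Ha' Hb') (conj N1' N2')) as [_ En'].
    repeat split; trivial.
    + replace (a (i + 1)%Z ^ 2) with (b (i + 1)%Z * (a (i + 1)%Z ^ 2 / b (i + 1)%Z))
        by (field; lra).
      congruence.
    + rewrite <- En', En1; field; lra.
  - intros H i.
    destruct (Hpos i) as [Ha Hb]; destruct (Hpos (i + 1)%Z) as [Ha' Hb'].
    destruct (H i) as [Dm [En [L1 L2]]].
    destruct (H (i + 1)%Z) as [Dm' [En' _]]; rewrite Z.add_simpl_r in *.
    assert (Dm1 : m (i + 1)%Z - m i = b i + 2 * a i).
    { rewrite Dm', L1; field; lra. }
    assert (En1 : n i - n (i + 1)%Z = b i ^ 2 / a i).
    { rewrite En', <- L2; field; lra. }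
    destruct (proj2 (m_equations_iff _ _ _ _ _ Ha Hb) (conj Dm Dm1)).
    destruct (proj2 (n_equations_iff _ _ _ _ _ Ha Hb) (conj En1 En)).
    repeat split; assumption.
Qed.

(** * The one-step recursion *)

Lemma quadratic_pair_unique D a b a' b' : 0 < a -> 0 < b -> 0 < a' -> 0 < b' ->
  b * D = a ^ 2 -> b' * D = a' ^ 2 -> a + 2 * b = a' + 2 * b' -> a = a' /\ b = b'.
Proof.
  intros Ha Hb Ha' Hb' H H' Hsum.
  assert (HD : 0 < D) by nra.
  destruct (Rtotal_order a a') as [Hlt | [Heq | Hgt]].
  - exfalso; assert (b' < b) by lra; nra.
  - split; lra.
  - exfalso; assert (b < b') by lra; nra.
Qed.

Lemma linked_unique_next a b a1 b1 a2 b2 :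
  0 < a -> 0 < a1 -> 0 < b1 -> 0 < a2 -> 0 < b2 ->
  linked a b a1 b1 -> linked a b a2 b2 -> a1 = a2 /\ b1 = b2.
Proof.
  intros Ha Ha1 Hb1 Ha2 Hb2 [L1 L2] [L1' L2'].
  apply (quadratic_pair_unique (b + 2 * a)); trivial; try lra.
  apply (Rmult_eq_reg_l a); lra.
Qed.

Lemma linked_unique_prev a1 b1 a2 b2 a b :
  0 < b -> 0 < a1 -> 0 < b1 -> 0 < a2 -> 0 < b2 ->
  linked a1 b1 a b -> linked a2 b2 a b -> a1 = a2 /\ b1 = b2.
Proof.
  intros Hb Ha1 Hb1 Ha2 Hb2 L L'.
  destruct (linked_unique_next b a b1 a1 b2 a2) as [E1 E2]; auto using linked_swap.
Qed.

(* [fst (step s)] is the positive root [a'] of [2 a'^2 + P a' = P Q], which is what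
   [linked p q a' b'] reduces to once [b' = a'^2 / P] is eliminated. *)
Definition step (s : R * R) : R * R :=
  let P := snd s + 2 * fst s in
  let Q := snd s ^ 2 / fst s in
  let a := (- P + sqrt (P ^ 2 + 8 * P * Q)) / 4 in
  (a, a ^ 2 / P).

Lemma step_spec s : 0 < fst s -> 0 < snd s ->
  0 < fst (step s) /\ 0 < snd (step s) /\ linked (fst s) (snd s) (fst (step s)) (snd (step s)).
Proof.
  destruct s as [p q]; cbn [fst snd]; intros Hp Hq. unfold step; cbn [fst snd].
  set (P := q + 2 * p). set (Q := q ^ 2 / p).
  assert (HP : 0 < P) by (unfold P; lra).
  assert (HQ : 0 < Q) by (unfold Q; apply Rdiv_lt_0_compat; nra).
  assert (HpQ : p * Q = q ^ 2) by (unfold Q; field; lra).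
  set (r := sqrt (P ^ 2 + 8 * P * Q)).
  assert (Hr2 : r * r = P ^ 2 + 8 * P * Q) by (apply sqrt_sqrt; nra).
  assert (Hr0 : 0 <= r) by apply sqrt_pos.
  assert (Hr : P < r) by nra.
  set (a := (- P + r) / 4).
  assert (Ha : 0 < a) by (unfold a; lra).
  assert (Hquad : P * a + 2 * a ^ 2 = P * Q) by (unfold a; nra).
  assert (Hroot : a + 2 * (a ^ 2 / P) = Q).
  { apply (Rmult_eq_reg_l P); [|lra]. rewrite <- Hquad; field; lra. }
  repeat split.
  - exact Ha.
  - apply Rdiv_lt_0_compat; nra.
  - fold P; field; lra.
  - rewrite Hroot; exact HpQ.
Qed.

Definition orbit (s : R * R) (k : nat) : R * R := Nat.iter k step s.

Lemma orbit_succ s k : orbit s (S k) = orbit (step s) k.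
Proof. apply Nat.iter_succ_r. Qed.

Lemma orbit_pos s k : 0 < fst s -> 0 < snd s ->
  0 < fst (orbit s k) /\ 0 < snd (orbit s k).
Proof.
  intros Hp Hq; induction k as [|k [IHp IHq]]; [auto|].
  unfold orbit; rewrite Nat.iter_succ.
  destruct (step_spec _ IHp IHq) as [H1 [H2 _]]; auto.
Qed.

(** * Summability along orbits *)

Definition stride (s : R * R) : R := fst s + 2 * snd s.

Definition potential (s : R * R) : R := fst s ^ 2 / (snd s * stride s).

Lemma stride_step s : 0 < fst s -> 0 < snd s -> stride (step s) = snd s ^ 2 / fst s.
Proof.
  intros Hp Hq; destruct (step_spec s Hp Hq) as [_ [_ [_ L]]].
  unfold stride; rewrite <- L; field; lra.
Qed.

Lemma Rdiv_le_cross a b c d : 0 < b -> 0 < d -> a * d <= c * b -> a / b <= c / d.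
Proof.
  intros Hb Hd H.
  apply (Rmult_le_reg_r (b * d)); [nra|].
  replace (a / b * (b * d)) with (a * d) by (field; lra).
  replace (c / d * (b * d)) with (c * b) by (field; lra).
  exact H.
Qed.

Lemma potential_step s : 0 < fst s -> 0 < snd s -> 9 * potential s <= potential (step s).
Proof.
  intros Hp Hq; destruct (step_spec s Hp Hq) as [Hp' [Hq' [L1 L2]]].
  unfold potential, stride.
  set (p := fst s) in *; set (q := snd s) in *.
  set (p' := fst (step s)) in *; set (q' := snd (step s)) in *.
  clearbody p q p' q'.
  replace (9 * (p ^ 2 / (q * (p + 2 * q)))) with (9 * p ^ 2 / (q * (p + 2 * q))) by (field; lra).
  apply Rdiv_le_cross; [nra | nra |].
  replace (9 * p ^ 2 * (q' * (p' + 2 * q'))) with (9 * p * q' * (p * (p' + 2 * q'))) by ring.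
  rewrite L2, L1.
  assert (0 <= q * q' * (p - q) ^ 2) by (apply Rmult_le_pos; [nra | apply pow2_ge_0]).
  replace (q' * (q + 2 * p) * (q * (p + 2 * q)))
    with (9 * p * q' * q ^ 2 + 2 * (q * q' * (p - q) ^ 2)) by ring.
  lra.
Qed.

Lemma stride_step_contract s : 0 < fst s -> 0 < snd s -> snd s <= fst s ->
  stride (step s) <= stride s / 3 /\ snd (step s) <= fst (step s).
Proof.
  intros Hp Hq Hqp; destruct (step_spec s Hp Hq) as [Hp' [Hq' [L1 L2]]].
  unfold stride.
  set (p := fst s) in *; set (q := snd s) in *.
  set (p' := fst (step s)) in *; set (q' := snd (step s)) in *.
  clearbody p q p' q'.
  assert (Hsmall : p' + 2 * q' <= (p + 2 * q) / 3).
  { apply (Rmult_le_reg_l (3 * p)); [lra|].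
    replace (3 * p * ((p + 2 * q) / 3)) with (p * (p + 2 * q)) by field.
    assert (0 <= (p - q) * (p + 3 * q)) by (apply Rmult_le_pos; lra).
    nra. }
  split; [exact Hsmall|].
  assert (p' <= q) by nra.
  nra.
Qed.

Lemma orbit_eventually_dominant s : 0 < fst s -> 0 < snd s ->
  exists N, snd (orbit s N) <= fst (orbit s N).
Proof.
  intros Hp Hq.
  assert (Hv0 : 0 < potential s).
  { unfold potential, stride; apply Rdiv_lt_0_compat; [nra | apply Rmult_lt_0_compat; lra]. }
  assert (Hgrow : forall k, (1 + 8 * INR k) * potential s <= potential (orbit s k)).
  { induction k as [|k IH]; [simpl; lra|].
    destruct (orbit_pos s k Hp Hq) as [Hpk Hqk].
    pose proof (potential_step _ Hpk Hqk) as H9.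
    rewrite S_INR; change (orbit s (S k)) with (step (orbit s k)).
    pose proof (pos_INR k); nra. }
  destruct (archimed_cor1 (potential s) Hv0) as [N [HN HN0]].
  exists N.
  destruct (orbit_pos s N Hp Hq) as [HpN HqN].
  assert (Hone : 1 <= potential (orbit s N)).
  { assert (HNpos : 0 < INR N) by (apply lt_0_INR; exact HN0).
    assert (1 < INR N * potential s).
    { apply (Rmult_lt_compat_l (INR N)) in HN; [|exact HNpos].
      rewrite Rinv_r in HN; lra. }
    specialize (Hgrow N); nra. }
  unfold potential, stride in Hone.
  set (p := fst (orbit s N)) in *; set (q := snd (orbit s N)) in *.
  assert (q * (p + 2 * q) <= p ^ 2).
  { apply (Rmult_le_compat_r (q * (p + 2 * q))) in Hone; [|nra].
    replace (p ^ 2 / (q * (p + 2 * q)) * (q * (p + 2 * q))) with (p ^ 2) in Hone by (field; lra).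
    lra. }
  nra.
Qed.

Lemma orbit_stride_eventually_contracts s : 0 < fst s -> 0 < snd s ->
  exists N, forall k, (N <= k)%nat -> stride (orbit s (S k)) <= / 3 * stride (orbit s k).
Proof.
  intros Hp Hq.
  destruct (orbit_eventually_dominant s Hp Hq) as [N HN].
  exists N.
  assert (Hdom : forall k, (N <= k)%nat -> snd (orbit s k) <= fst (orbit s k)).
  { intros k Hk; induction Hk as [|k _ IH]; [exact HN|].
    destruct (orbit_pos s k Hp Hq) as [Hpk Hqk].
    exact (proj2 (stride_step_contract _ Hpk Hqk IH)). }
  intros k Hk.
  destruct (orbit_pos s k Hp Hq) as [Hpk Hqk].
  pose proof (proj1 (stride_step_contract _ Hpk Hqk (Hdom k Hk))).
  change (orbit s (S k)) with (step (orbit s k)); lra.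
Qed.

Fixpoint partial_sum (u : nat -> R) (K : nat) : R :=
  match K with O => 0 | S K => partial_sum u K + u K end.

Lemma partial_sum_ext u v : (forall k, u k = v k) -> forall K, partial_sum u K = partial_sum v K.
Proof. intros H K; induction K as [|K IH]; simpl; [reflexivity | rewrite IH, H; reflexivity]. Qed.

Lemma partial_sum_cv_of_ratio_tail u r N : (forall k, 0 <= u k) -> r < 1 ->
  (forall k, (N <= k)%nat -> u (S k) <= r * u k) -> exists L, Un_cv (partial_sum u) L.
Proof.
  intros Hu Hr Hratio.
  set (B := partial_sum u N + u N / (1 - r)).
  assert (Hgrowing : Un_growing (partial_sum u)) by (intro k; simpl; specialize (Hu k); lra).
  (* From [N] on, [partial_sum u k + u k / (1 - r)] is nonincreasing. *)
  assert (Htail : forall k, (N <= k)%nat -> partial_sum u k + u k / (1 - r) <= B).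
  { intros k Hk; induction Hk as [|k Hk IH]; [unfold B; lra|].
    simpl. specialize (Hratio k Hk).
    assert (u (S k) / (1 - r) <= r * u k / (1 - r)).
    { unfold Rdiv; apply Rmult_le_compat_r; [apply Rlt_le, Rinv_0_lt_compat; lra | exact Hratio]. }
    assert (u k / (1 - r) = u k + r * u k / (1 - r)) by (field; lra).
    lra. }
  assert (Hub : forall K, partial_sum u K <= B).
  { intro K.
    assert (Hdiv : forall k, 0 <= u k / (1 - r))
      by (intro k; apply Rmult_le_pos; [apply Hu | apply Rlt_le, Rinv_0_lt_compat; lra]).
    destruct (le_ge_dec K N) as [HK | HK].
    - pose proof (growing_prop _ N K Hgrowing HK). pose proof (Htail N (le_n N)).
      specialize (Hdiv N); lra.
    - pose proof (Htail K HK); specialize (Hdiv K); lra. }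
  destruct (growing_cv (partial_sum u) Hgrowing) as [L HL].
  - exists B; intros x [K ->]; apply Hub.
  - exists L; exact HL.
Qed.

Lemma orbit_stride_summable s : 0 < fst s -> 0 < snd s ->
  exists L, Un_cv (partial_sum (fun k => stride (orbit s k))) L.
Proof.
  intros Hp Hq.
  destruct (orbit_stride_eventually_contracts s Hp Hq) as [N HN].
  apply (partial_sum_cv_of_ratio_tail _ (/ 3) N); [|lra|exact HN].
  intro k; destruct (orbit_pos s k Hp Hq); unfold stride; lra.
Qed.

(** * Sequences on Z with prescribed increments *)

(* The discrete antiderivative of [D] vanishing at 0; since [Z.to_nat] truncates negative
   integers to 0, at most one of the two sums is nonempty. *)
Definition zsum (D : Z -> R) (i : Z) : R :=
  partial_sum (fun k => D (Z.of_nat (S k))) (Z.to_nat i)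
  - partial_sum (fun k => D (- Z.of_nat k)%Z) (Z.to_nat (- i)).

Lemma zsum_diff D i : zsum D i - zsum D (i - 1)%Z = D i.
Proof.
  unfold zsum. destruct (Z_lt_le_dec 0 i) as [Hi | Hi].
  - replace (Z.to_nat (- i)) with 0%nat by lia.
    replace (Z.to_nat (- (i - 1))) with 0%nat by lia.
    replace (Z.to_nat i) with (S (Z.to_nat (i - 1))) by lia; cbn [partial_sum].
    replace (Z.of_nat (S (Z.to_nat (i - 1)))) with i by lia; ring.
  - replace (Z.to_nat i) with 0%nat by lia.
    replace (Z.to_nat (i - 1)) with 0%nat by lia.
    replace (Z.to_nat (- (i - 1))) with (S (Z.to_nat (- i))) by lia; cbn [partial_sum].
    replace (- Z.of_nat (Z.to_nat (- i)))%Z with i by lia; ring.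
Qed.

Lemma lim_minfty_zsum D L : Un_cv (partial_sum (fun k => D (- Z.of_nat k)%Z)) L ->
  lim_minfty (fun i => L + zsum D i) 0.
Proof.
  intros H eps Heps; destruct (H eps Heps) as [K HK].
  exists (- Z.of_nat K)%Z; intros i Hi.
  specialize (HK (Z.to_nat (- i)) ltac:(lia)); unfold R_dist in HK.
  unfold zsum; replace (Z.to_nat i) with 0%nat by lia; cbn [partial_sum].
  rewrite Rabs_minus_sym in HK.
  replace (L + (0 - partial_sum (fun k => D (- Z.of_nat k)%Z) (Z.to_nat (- i))) - 0)
    with (L - partial_sum (fun k => D (- Z.of_nat k)%Z) (Z.to_nat (- i))) by ring.
  exact HK.
Qed.

Lemma lim_pinfty_zsum D L : Un_cv (partial_sum (fun k => D (Z.of_nat (S k)))) L ->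
  lim_pinfty (fun i => L - zsum D i) 0.
Proof.
  intros H eps Heps; destruct (H eps Heps) as [K HK].
  exists (Z.of_nat K); intros i Hi.
  specialize (HK (Z.to_nat i) ltac:(lia)); unfold R_dist in HK.
  unfold zsum; replace (Z.to_nat (- i)) with 0%nat by lia; cbn [partial_sum].
  rewrite Rabs_minus_sym in HK.
  replace (L - (partial_sum (fun k => D (Z.of_nat (S k))) (Z.to_nat i) - 0) - 0)
    with (L - partial_sum (fun k => D (Z.of_nat (S k))) (Z.to_nat i)) by ring.
  exact HK.
Qed.

Lemma Z_constant_of_increments (h : Z -> R) :
  (forall i, h i = h (i - 1)%Z) -> forall i, h i = h 0%Z.
Proof.
  intros H; apply Z.peano_ind; [reflexivity | intros i IH | intros i IH].
  - rewrite H; replace (Z.succ i - 1)%Z with i by lia; exact IH.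
  - rewrite <- IH, (H i); f_equal; lia.
Qed.

Lemma lim_minfty_const_diff u v c : lim_minfty u 0 -> lim_minfty v 0 ->
  (forall i, u i - v i = c) -> c = 0.
Proof.
  intros Hu Hv Hc.
  assert (Hsmall : forall eps, 0 < eps -> Rabs c < 2 * eps).
  { intros eps Heps.
    destruct (Hu eps Heps) as [N1 H1]; destruct (Hv eps Heps) as [N2 H2].
    specialize (H1 (Z.min N1 N2) ltac:(lia)); specialize (H2 (Z.min N1 N2) ltac:(lia)).
    rewrite Rminus_0_r in H1, H2; rewrite <- (Hc (Z.min N1 N2)).
    apply Rabs_def2 in H1, H2; apply Rabs_def1; lra. }
  destruct (Req_dec c 0) as [Hc0 | Hne]; [exact Hc0|].
  pose proof (Rabs_pos_lt c Hne); specialize (Hsmall (Rabs c / 4)); lra.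
Qed.

Lemma lim_minfty_of_lim_pinfty u L : lim_pinfty u L -> lim_minfty (fun i => u (- i)%Z) L.
Proof.
  intros H eps Heps; destruct (H eps Heps) as [N HN].
  exists (- N)%Z; intros i Hi; apply HN; lia.
Qed.

Lemma const_diff_of_increments u v : (forall i, u i - u (i - 1)%Z = v i - v (i - 1)%Z) ->
  forall i, u i - v i = u 0%Z - v 0%Z.
Proof.
  intros H; apply (Z_constant_of_increments (fun i => u i - v i)).
  intro i; specialize (H i); lra.
Qed.

Lemma eq_of_increments_lim_minfty u v : (forall i, u i - u (i - 1)%Z = v i - v (i - 1)%Z) ->
  lim_minfty u 0 -> lim_minfty v 0 -> forall i, u i = v i.
Proof.
  intros H Hu Hv i.
  pose proof (const_diff_of_increments u v H) as Hc.
  pose proof (lim_minfty_const_diff u v _ Hu Hv Hc).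
  specialize (Hc i); lra.
Qed.

Lemma eq_of_increments_lim_pinfty u v : (forall i, u i - u (i - 1)%Z = v i - v (i - 1)%Z) ->
  lim_pinfty u 0 -> lim_pinfty v 0 -> forall i, u i = v i.
Proof.
  intros H Hu Hv i.
  pose proof (const_diff_of_increments u v H) as Hc.
  pose proof (lim_minfty_const_diff _ _ _ (lim_minfty_of_lim_pinfty u 0 Hu)
                (lim_minfty_of_lim_pinfty v 0 Hv) (fun j => Hc (- j)%Z)).
  specialize (Hc i); lra.
Qed.

(* Towards negative indices the recursion is run forwards from [(b0, a0)] and read with the
   two components exchanged (see [linked_swap]). *)
Definition two_sided_orbit (a0 b0 : R) (i : Z) : R * R :=
  if (0 <=? i)%Z then orbit (a0, b0) (Z.to_nat i)
  else (snd (orbit (b0, a0) (Z.to_nat (- i))), fst (orbit (b0, a0) (Z.to_nat (- i)))).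

Lemma two_sided_orbit_nat a0 b0 k : two_sided_orbit a0 b0 (Z.of_nat k) = orbit (a0, b0) k.
Proof.
  unfold two_sided_orbit.
  replace (0 <=? Z.of_nat k)%Z with true by (symmetry; apply Z.leb_le; lia).
  now rewrite Nat2Z.id.
Qed.

Lemma two_sided_orbit_opp_nat a0 b0 k : two_sided_orbit a0 b0 (- Z.of_nat k)%Z =
  (snd (orbit (b0, a0) k), fst (orbit (b0, a0) k)).
Proof.
  destruct k as [|k]; [reflexivity|].
  unfold two_sided_orbit.
  replace (0 <=? - Z.of_nat (S k))%Z with false by (symmetry; apply Z.leb_gt; lia).
  now replace (Z.to_nat (- - Z.of_nat (S k))) with (S k) by lia.
Qed.

Lemma Z_nat_or_opp_succ (i : Z) :
  (exists k, i = Z.of_nat k) \/ (exists k, i = (- Z.of_nat (S k))%Z).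
Proof.
  destruct (Z_le_gt_dec 0 i).
  - left; exists (Z.to_nat i); lia.
  - right; exists (Z.to_nat (- i - 1)); lia.
Qed.

Section TwoSidedOrbit.

Variables a0 b0 : R.
Hypotheses (Ha0 : 0 < a0) (Hb0 : 0 < b0).

Let T := two_sided_orbit a0 b0.

Lemma two_sided_orbit_pos i : 0 < fst (T i) /\ 0 < snd (T i).
Proof.
  unfold T; destruct (Z_nat_or_opp_succ i) as [[k ->] | [k ->]].
  - rewrite two_sided_orbit_nat; apply orbit_pos; assumption.
  - rewrite two_sided_orbit_opp_nat; cbn [fst snd].
    destruct (orbit_pos (b0, a0) (S k)); auto.
Qed.

Lemma two_sided_orbit_linked i :
  linked (fst (T i)) (snd (T i)) (fst (T (i + 1)%Z)) (snd (T (i + 1)%Z)).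
Proof.
  unfold T; destruct (Z_nat_or_opp_succ i) as [[k ->] | [k ->]].
  - replace (Z.of_nat k + 1)%Z with (Z.of_nat (S k)) by lia.
    rewrite !two_sided_orbit_nat.
    destruct (orbit_pos (a0, b0) k Ha0 Hb0) as [Hp Hq].
    exact (proj2 (proj2 (step_spec _ Hp Hq))).
  - replace (- Z.of_nat (S k) + 1)%Z with (- Z.of_nat k)%Z by lia.
    rewrite !two_sided_orbit_opp_nat; cbn [fst snd].
    destruct (orbit_pos (b0, a0) k Hb0 Ha0) as [Hp Hq].
    exact (linked_swap _ _ _ _ (proj2 (proj2 (step_spec _ Hp Hq)))).
Qed.

Lemma two_sided_orbit_summable_left :
  exists L,
    Un_cv (partial_sum (fun k => fst (T (- Z.of_nat k)%Z) ^ 2 / snd (T (- Z.of_nat k)%Z))) L.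
Proof.
  destruct (step_spec (b0, a0) Hb0 Ha0) as [Hp [Hq _]].
  destruct (orbit_stride_summable _ Hp Hq) as [L HL].
  exists L.
  apply (Un_cv_ext (partial_sum (fun k => stride (orbit (step (b0, a0)) k)))); [| exact HL].
  apply partial_sum_ext; intro k.
  unfold T; rewrite two_sided_orbit_opp_nat, <- orbit_succ; cbn [fst snd].
  destruct (orbit_pos (b0, a0) k Hb0 Ha0) as [Hpk Hqk].
  exact (stride_step _ Hpk Hqk).
Qed.

Lemma two_sided_orbit_summable_right :
  exists L, Un_cv (partial_sum (fun k => stride (T (Z.of_nat (S k))))) L.
Proof.
  destruct (step_spec (a0, b0) Ha0 Hb0) as [Hp [Hq _]].
  destruct (orbit_stride_summable _ Hp Hq) as [L HL].
  exists L.
  apply (Un_cv_ext (partial_sum (fun k => stride (orbit (step (a0, b0)) k)))); [| exact HL].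
  apply partial_sum_ext; intro k.
  unfold T; rewrite two_sided_orbit_nat, orbit_succ; reflexivity.
Qed.

End TwoSidedOrbit.

Lemma initial_value_exists x : 0 < x -> exists a0, 0 < a0 /\ a0 + 2 * a0 ^ 2 = x.
Proof.
  intros Hx.
  assert (Hr2 : sqrt (1 + 8 * x) * sqrt (1 + 8 * x) = 1 + 8 * x) by (apply sqrt_sqrt; lra).
  pose proof (sqrt_pos (1 + 8 * x)).
  exists ((-1 + sqrt (1 + 8 * x)) / 4); split; nra.
Qed.

Lemma default_ABMN_exists x : 0 < x ->
  exists a b m n : Z -> R, default_ABMN a b m n /\ central_ratio m n = x.
Proof.
  intros Hx; destruct (initial_value_exists x Hx) as [a0 [Ha0 Hax]].
  assert (Hb0 : 0 < a0 ^ 2) by nra.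
  set (T := two_sided_orbit a0 (a0 ^ 2)).
  set (a := fun i => fst (T i)); set (b := fun i => snd (T i)).
  set (D := fun i => a i ^ 2 / b i); set (E := fun i => a i + 2 * b i).
  destruct (two_sided_orbit_summable_left a0 (a0 ^ 2) Ha0 Hb0) as [Lm HLm].
  destruct (two_sided_orbit_summable_right a0 (a0 ^ 2) Ha0 Hb0) as [Ln HLn].
  set (m := fun i => Lm + zsum D i); set (n := fun i => Ln - zsum E i).
  assert (Hpos : forall i, 0 < a i /\ 0 < b i) by exact (two_sided_orbit_pos a0 (a0 ^ 2) Ha0 Hb0).
  assert (Hm : forall i, m i - m (i - 1)%Z = D i)
    by (intro i; unfold m; rewrite <- (zsum_diff D i); ring).
  assert (Hn : forall i, n (i - 1)%Z - n i = E i)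
    by (intro i; unfold n; rewrite <- (zsum_diff E i); ring).
  assert (HT0 : T 0%Z = (a0, a0 ^ 2)) by exact (two_sided_orbit_nat a0 (a0 ^ 2) 0).
  assert (HD0 : m 0%Z - m (-1)%Z = 1).
  { change (-1)%Z with (0 - 1)%Z; rewrite Hm.
    unfold D, a, b; rewrite HT0; cbn [fst snd]; field; lra. }
  exists a, b, m, n; split; [split; [split|]|].
  - apply (positive_ABMN_iff a b m n Hpos); intro i.
    split; [apply Hm | split; [apply Hn | apply two_sided_orbit_linked; assumption]].
  - exact Hpos.
  - split; [exact (lim_minfty_zsum D Lm HLm) |].
    split; [exact (lim_pinfty_zsum E Ln HLn) | exact HD0].
  - unfold central_ratio; rewrite HD0; change (-1)%Z with (0 - 1)%Z; rewrite Hn.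
    unfold E, a, b; rewrite HT0; cbn [fst snd]; lra.
Qed.

Lemma linked_sequences_agree a b a' b' :
  (forall i, 0 < a i /\ 0 < b i) -> (forall i, 0 < a' i /\ 0 < b' i) ->
  (forall i, linked (a i) (b i) (a (i + 1)%Z) (b (i + 1)%Z)) ->
  (forall i, linked (a' i) (b' i) (a' (i + 1)%Z) (b' (i + 1)%Z)) ->
  a 0%Z = a' 0%Z -> b 0%Z = b' 0%Z -> forall i, a i = a' i /\ b i = b' i.
Proof.
  intros Hpos Hpos' L L' Ea0 Eb0.
  apply Z.peano_ind; [auto | intros i [Ea Eb] | intros i [Ea Eb]].
  - destruct (Hpos i), (Hpos (Z.succ i)), (Hpos' (Z.succ i)).
    apply (linked_unique_next (a i) (b i)); auto.
    rewrite Ea, Eb; apply L'.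
  - pose proof (L (Z.pred i)) as Lp; pose proof (L' (Z.pred i)) as Lp'.
    rewrite Z.add_1_r, Z.succ_pred in Lp, Lp'.
    destruct (Hpos i), (Hpos (Z.pred i)), (Hpos' (Z.pred i)).
    apply (linked_unique_prev _ _ _ _ (a i) (b i)); auto.
    rewrite Ea, Eb; exact Lp'.
Qed.

Lemma default_ABMN_initial a b m n : default_ABMN a b m n ->
  b 0%Z = a 0%Z ^ 2 /\ central_ratio m n = a 0%Z + 2 * b 0%Z.
Proof.
  intros [[H Hpos] [_ [_ HD0]]].
  destruct (proj1 (positive_ABMN_iff a b m n Hpos) H 0%Z) as [Dm [En _]]; cbn in Dm, En.
  destruct (Hpos 0%Z).
  rewrite HD0 in Dm.
  unfold central_ratio; rewrite HD0, En; split.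
  - rewrite <- (Rmult_1_r (b 0%Z)), Dm; field; lra.
  - field.
Qed.

Lemma central_ratio_pos a b m n : default_ABMN a b m n -> 0 < central_ratio m n.
Proof.
  intros Hd; destruct (default_ABMN_initial a b m n Hd) as [_ ->].
  destruct Hd as [[_ Hpos] _]; destruct (Hpos 0%Z); lra.
Qed.

Lemma default_ABMN_unique a1 b1 m1 n1 a2 b2 m2 n2 :
  default_ABMN a1 b1 m1 n1 -> default_ABMN a2 b2 m2 n2 ->
  central_ratio m1 n1 = central_ratio m2 n2 ->
  forall i, a1 i = a2 i /\ b1 i = b2 i /\ m1 i = m2 i /\ n1 i = n2 i.
Proof.
  intros Hd1 Hd2 Hx.
  destruct (default_ABMN_initial _ _ _ _ Hd1) as [Hb1 Hx1].
  destruct (default_ABMN_initial _ _ _ _ Hd2) as [Hb2 Hx2].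
  destruct Hd1 as [[H1 Hpos1] [Hm1 [Hn1 _]]], Hd2 as [[H2 Hpos2] [Hm2 [Hn2 _]]].
  pose proof (proj1 (positive_ABMN_iff _ _ _ _ Hpos1) H1) as C1.
  pose proof (proj1 (positive_ABMN_iff _ _ _ _ Hpos2) H2) as C2.
  assert (Hab0 : a1 0%Z = a2 0%Z /\ b1 0%Z = b2 0%Z).
  { destruct (Hpos1 0%Z), (Hpos2 0%Z).
    apply (quadratic_pair_unique 1); auto; lra. }
  assert (Hab : forall i, a1 i = a2 i /\ b1 i = b2 i).
  { apply linked_sequences_agree; try tauto; intro i; [apply (C1 i) | apply (C2 i)]. }
  assert (Hm : forall i, m1 i = m2 i).
  { apply eq_of_increments_lim_minfty; trivial; intro i.
    destruct (C1 i) as [-> _], (C2 i) as [-> _], (Hab i) as [-> ->]; reflexivity. }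
  assert (Hn : forall i, n1 i = n2 i).
  { apply eq_of_increments_lim_pinfty; trivial; intro i.
    destruct (C1 i) as [_ [E1 _]], (C2 i) as [_ [E2 _]], (Hab i) as [Ea Eb]; lra. }
  intro i; destruct (Hab i); auto.
Qed.

Theorem mainTheorem8 :
  (forall a b m n : Z -> R, default_ABMN a b m n -> 0 < central_ratio m n) /\
  (forall x : R, 0 < x ->
     (exists a b m n : Z -> R, default_ABMN a b m n /\ central_ratio m n = x) /\
     (forall a1 b1 m1 n1 a2 b2 m2 n2 : Z -> R,
        default_ABMN a1 b1 m1 n1 -> central_ratio m1 n1 = x ->
        default_ABMN a2 b2 m2 n2 -> central_ratio m2 n2 = x ->
        forall i : Z, a1 i = a2 i /\ b1 i = b2 i /\ m1 i = m2 i /\ n1 i = n2 i)).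
Proof.
  split; [exact central_ratio_pos |].
  intros x Hx; split; [exact (default_ABMN_exists x Hx) |].
  intros a1 b1 m1 n1 a2 b2 m2 n2 Hd1 Hx1 Hd2 Hx2.
  apply default_ABMN_unique; congruence.
Qed.
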